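(* Let $R$ be a commutative semiring and $v:R\to M$ a surjective m-valuation with support $\mathfrak q$. Let $U(v):=\widehat{U^0(v)}$ and $\varphi_v:=\sigma_{U^0(v)}\circ\varphi_v^0:R\to U(v)$. Then $\varphi_v$ is a supervaluation covering $v$ and is an initial cover of $v$: for any supervaluation $\psi:R\to V$ covering $v$, there exists a unique semiring homomorphism $\alpha:U(v)\to V$ over $M$ with $\psi=\alpha\circ\varphi_v$.
   Context: A bipotent semiring $M$: commutative monoid with absorbing $0$, total order compatible with multiplication, $0$ least, $x+y=\max(x,y)$. m-valuation: multiplicative $v:R\to M$ with $v(0)=0$, $v(1)=1$, $v(a+b)\le\max(v(a),v(b))$. A supertropical monoid is a commutative monoid $U$ with absorbing $0$, idempotent $e$ with $ex=0\Rightarrow x=0$, and a total order on $eU$ making it a bipotent semiring; it is a (supertropical) semiring if the addition $x+y:=y$ ($ex<ey$), $x$ ($ex>ey$), $ex$ ($ex=ey$) is associative and distributive. An m-supervaluation is $\varphi:R\to U$ with $\varphi(0)=0$, $\varphi(1)=1$, multiplicative, $e\varphi(a+b)\le\max(e\varphi(a),e\varphi(b))$; a supervaluation is an m-supervaluation whose target is a supertropical semiring; it covers $v$ if $eU=M$ and $e\varphi=v$. ''Over $M$'' means restricting to the identity on $M$. $U^0(v)$: the set $(R\setminus\mathfrak q)\sqcup M$ with product $xy$ if $x,y,xy\in R\setminus\mathfrak q$; $0_M$ if $x,y\in R\setminus\mathfrak q$, $xy\in\mathfrak q$; $v(x)y$ if $x\in R\setminus\mathfrak q$, $y\in M$ (and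 symmetrically); the $M$-product on $M$; $e=1_M$, order of $M$ on $eU^0(v)=M$. $\varphi_v^0(a)=a$ for $a\notin\mathfrak q$, $0_M$ for $a\in\mathfrak q$. For a supertropical monoid $U$ with $M=eU$: $D(U):=M\cup\{yz:y,z\in U,\exists y'\in M,\ y'<ey,\ y'z=eyz\}$; $\hat U:=U/E$ where $x\sim_E y$ iff $x=y$ or ($x,y\in D(U)$ and $ex=ey$), with the induced supertropical monoid structure (multiplication and $e$ induced, ghost ideal identified with $M$); $\sigma_U:U\to\hat U$ the projection. *)

From HB Require Import structures.
From mathcomp Require Import all_boot all_order all_algebra.
From Stdlib Require Import ClassicalEpsilon.
Set Implicit Arguments. Unset Strict Implicit. Unset Printing Implicit Defensive.
Import GRing.Theory.
Local Open Scope ring_scope.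

(* Bipotent semirings.  M is a commutative (semi)ring-like type: its        *)
(* multiplicative commutative monoid with absorbing 0 is the monoid of the  *)

Definition bmax (M : Type) (le : rel M) (x y : M) : M := if le x y then y else x.
Definition blt (M : Type) (le : rel M) (x y : M) : bool := le x y && ~~ le y x.

Definition is_bipotent (M : comPzSemiRingType) (le : rel M) : Prop :=
  [/\ [/\ reflexive le, antisymmetric le, transitive le & total le],
      (forall x : M, le 0 x),
      (forall x y z : M, le x y -> le (x * z) (y * z)) &
      (forall x y : M, x + y = bmax le x y)].

Definition is_mvaluation (R M : comPzSemiRingType) (le : rel M) (v : R -> M) : Prop :=
  [/\ v 0 = 0, v 1 = 1, (forall a b, v (a * b) = v a * v b) &
      (forall a b, le (v (a + b)) (bmax le (v a) (v b)))].

(* Supertropical monoids U whose ghost ideal eU is identified with M.      *)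
(*   ghost : M -> U is the identification of M with eU (an isomorphism of  *)
(*           monoids with absorbing zero onto eU; the order on eU is the   *)
(*           one transported from M),                                      *)
(*   gv    : U -> M gives, for x : U, the element ex of eU = M.            *)
Record stm_ops (M U : Type) := STMOps {
  smul : U -> U -> U;
  sone : U;
  szero : U;
  se : U;
  sghost : M -> U;
  sgv : U -> M }.

Definition is_stmonoid (M : comPzSemiRingType) (le : rel M) (U : Type)
    (S : stm_ops M U) : Prop :=
  [/\ is_bipotent le,
      [/\ associative (smul S), commutative (smul S),
          left_id (sone S) (smul S) /\ left_zero (szero S) (smul S),
          smul S (se S) (se S) = se S &
          (forall x, smul S (se S) x = szero S -> x = szero S)] &
      [/\ injective (sghost S), sghost S 1 = se S, sghost S 0 = szero S,
          (forall m n, sghost S (m * n) = smul S (sghost S m) (sghost S n)) &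
          (forall x, sghost S (sgv S x) = smul S (se S) x)]].

Definition sadd (M : Type) (le : rel M) (U : Type) (S : stm_ops M U) (x y : U) : U :=
  if blt le (sgv S x) (sgv S y) then y
  else if blt le (sgv S y) (sgv S x) then x
  else smul S (se S) x.

Definition is_stsemiring (M : comPzSemiRingType) (le : rel M) (U : Type)
    (S : stm_ops M U) : Prop :=
  [/\ is_stmonoid le S, associative (sadd le S) &
      (forall x y z, smul S x (sadd le S y z) =
                     sadd le S (smul S x y) (smul S x z))].

Definition is_msupervaluation (R M : comPzSemiRingType) (le : rel M) (U : Type)
    (S : stm_ops M U) (phi : R -> U) : Prop :=
  [/\ is_stmonoid le S, phi 0 = szero S, phi 1 = sone S,
      (forall a b, phi (a * b) = smul S (phi a) (phi b)) &
      (forall a b, le (sgv S (phi (a + b)))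
                      (bmax le (sgv S (phi a)) (sgv S (phi b))))].

Definition is_supervaluation (R M : comPzSemiRingType) (le : rel M) (U : Type)
    (S : stm_ops M U) (phi : R -> U) : Prop :=
  is_stsemiring le S /\ is_msupervaluation le S phi.

Definition covers (R M : Type) (U : Type) (S : stm_ops M U) (phi : R -> U)
    (v : R -> M) : Prop :=
  forall a, smul S (se S) (phi a) = sghost S (v a).

Definition is_st_hom (M : Type) (le : rel M) (U V : Type) (S : stm_ops M U)
    (T : stm_ops M V) (f : U -> V) : Prop :=
  [/\ f (szero S) = szero T, f (sone S) = sone T,
      (forall x y, f (smul S x y) = smul T (f x) (f y)) &
      (forall x y, f (sadd le S x y) = sadd le T (f x) (f y))].

Definition over_M (M U V : Type) (S : stm_ops M U) (T : stm_ops M V)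
    (f : U -> V) : Prop :=
  forall m, f (sghost S m) = sghost T m.

(* The quotient is realized as the type of E-equivalence classes; the      *)
(* induced operations are computed on (arbitrarily chosen) representatives.*)
Section Hat.
Variables (M : Type) (le : rel M) (U : Type) (S : stm_ops M U).

Definition Dset (x : U) : Prop :=
  (exists m, x = sghost S m) \/
  (exists y z y', x = smul S y z /\ blt le y' (sgv S y) /\
                  smul S (sghost S y') z = smul S (smul S (se S) y) z).

Definition Erel (x y : U) : Prop :=
  x = y \/ (Dset x /\ Dset y /\ smul S (se S) x = smul S (se S) y).

Definition hatU : Type := {C : U -> Prop | exists x, C = Erel x}.

Definition sigmaU (x : U) : hatU := exist _ (Erel x) (ex_intro _ x erefl).

Definition hrepr (C : hatU) : U :=
  proj1_sig (constructive_indefinite_description _ (proj2_sig C)).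

Definition hat_ops : stm_ops M hatU :=
  STMOps (fun C D => sigmaU (smul S (hrepr C) (hrepr D)))
         (sigmaU (sone S)) (sigmaU (szero S)) (sigmaU (se S))
         (fun m => sigmaU (sghost S m)) (fun C => sgv S (hrepr C)).
End Hat.

Section U0.
Variables (R M : comPzSemiRingType) (v : R -> M).

Definition Rq : Type := {a : R | v a != 0}.
Definition U0 : Type := (Rq + M)%type.

Definition toU0 (a : R) : U0 :=
  match @idP (v a != 0) with
  | ReflectT h => inl (exist _ a h)
  | ReflectF _ => inr 0
  end.

Definition u0mul (x y : U0) : U0 :=
  match x, y with
  | inl a, inl b => toU0 (sval a * sval b)
  | inl a, inr m => inr (v (sval a) * m)
  | inr m, inl b => inr (m * v (sval b))
  | inr m, inr n => inr (m * n)
  end.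

Definition u0gv (x : U0) : M :=
  match x with inl a => v (sval a) | inr m => m end.

(* the unit of U^0(v) is 1_R (or 1_M if 1_R lies in q, i.e. M = 0) *)
Definition U0_ops : stm_ops M U0 :=
  STMOps u0mul (if toU0 1 is inl a then inl a else inr 1) (inr 0) (inr 1)
         (fun m => inr m) u0gv.

Definition phi0 (a : R) : U0 := toU0 a.
End U0.

Definition Uv (R M : comPzSemiRingType) (le : rel M) (v : R -> M) : Type :=
  hatU le (U0_ops v).
Definition Uv_ops (R M : comPzSemiRingType) (le : rel M) (v : R -> M)
  : stm_ops M (Uv le v) := hat_ops le (U0_ops v).
Definition phiv (R M : comPzSemiRingType) (le : rel M) (v : R -> M)
  (a : R) : Uv le v := sigmaU le (U0_ops v) (phi0 v a).

(* [U^0(v)] glues the tangible elements [R \ q] to the ghost ideal [M] along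
   [v], so any supervaluation [psi] covering [v] induces a monoid map
   [U^0(v) -> V] over [M] sending [a] to [psi a].  Supertropical addition on
   [U^0(v)] need not distribute; the defect lives on [D(U^0(v))], whose
   elements are forced to be ghost by distributivity in [V].  Hence the map
   factors through [U(v) = U^0(v)/E], which is a supertropical semiring for
   every supertropical monoid, and it is unique because every element of
   [U(v)] is the class of some [a] in [R] or [m] in [M]. *)

From Pilot Require Import Defs.
From mathcomp Require Import all_boot all_order all_algebra.
From Stdlib Require Import ClassicalEpsilon FunctionalExtensionality PropExtensionality ProofIrrelevance.
Set Implicit Arguments. Unset Strict Implicit. Unset Printing Implicit Defensive.
Import GRing.Theory.
Local Open Scope ring_scope.

Section Bipotent.
Variables (M : comPzSemiRingType) (le : rel M).
Hypothesis bipM : is_bipotent le.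

Lemma bip_refl x : le x x.
Proof. by case: bipM => [[refl _ _ _] _ _ _]. Qed.

Lemma bip_anti x y : le x y -> le y x -> x = y.
Proof. by case: bipM => [[_ anti _ _] _ _ _] lexy leyx; apply: anti; rewrite lexy leyx. Qed.

Lemma bip_trans x y z : le x y -> le y z -> le x z.
Proof. by case: bipM => [[_ _ trans _] _ _ _]; apply: trans. Qed.

Lemma bip_total x y : le x y || le y x.
Proof. by case: bipM => [[_ _ _ total] _ _ _]. Qed.

Lemma bip_mull x y z : le x y -> le (z * x) (z * y).
Proof. by case: bipM => [_ _ lemulr _] /(lemulr _ _ z); rewrite ![z * _]mulrC. Qed.

Lemma bltNge x y : blt le x y = ~~ le y x.
Proof.
rewrite /blt; case: (boolP (le y x)) => [_|/negPf leyxF]; first by rewrite andbF.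
by have := bip_total x y; rewrite leyxF orbF => ->.
Qed.

End Bipotent.

Section SupertropicalMonoid.
Variables (M : comPzSemiRingType) (le : rel M) (U : Type) (S : stm_ops M U).
Hypothesis stmS : is_stmonoid le S.
Local Notation mul := (smul S).
Local Notation e := (se S).
Local Notation gh := (sghost S).
Local Notation gv := (sgv S).
Local Notation sadd := (sadd le S).

Lemma stm_bipotent : is_bipotent le. Proof. by case: stmS. Qed.
Lemma smulA : associative mul. Proof. by case: stmS => _ []. Qed.
Lemma smulC : commutative mul. Proof. by case: stmS => _ []. Qed.
Lemma smul1 : left_id (sone S) mul. Proof. by case: stmS => _ [_ _ []]. Qed.
Lemma smul0 : left_zero (szero S) mul. Proof. by case: stmS => _ [_ _ []]. Qed.
Lemma smul_ee : mul e e = e. Proof. by case: stmS => _ []. Qed.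
Lemma smul_e_eq0 x : mul e x = szero S -> x = szero S.
Proof. by case: stmS => _ [_ _ _ _ eq0] _; apply: eq0. Qed.
Lemma sghost_inj : injective gh. Proof. by case: stmS => _ _ []. Qed.
Lemma sghost1 : gh 1 = e. Proof. by case: stmS => _ _ []. Qed.
Lemma sghost0 : gh 0 = szero S. Proof. by case: stmS => _ _ []. Qed.
Lemma sghostM m n : gh (m * n) = mul (gh m) (gh n). Proof. by case: stmS => _ _ []. Qed.
Lemma sghost_sgv x : gh (gv x) = mul e x. Proof. by case: stmS => _ _ []. Qed.

Lemma smulCA x y z : mul x (mul y z) = mul y (mul x z).
Proof. by rewrite smulA (smulC x) -smulA. Qed.

Lemma smulr0 x : mul x (szero S) = szero S.
Proof. by rewrite smulC smul0. Qed.

Lemma smul_e_ghost m : mul e (gh m) = gh m.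
Proof. by rewrite -sghost1 -sghostM mul1r. Qed.

Lemma smul_eK x : mul e (mul e x) = mul e x.
Proof. by rewrite smulA smul_ee. Qed.

Lemma sgv_ghost m : gv (gh m) = m.
Proof. by apply: sghost_inj; rewrite sghost_sgv smul_e_ghost. Qed.

Lemma sgv_e x : gv (mul e x) = gv x.
Proof. by apply: sghost_inj; rewrite !sghost_sgv smul_eK. Qed.

Lemma sgvM x y : gv (mul x y) = gv x * gv y.
Proof.
by apply: sghost_inj; rewrite sghostM !sghost_sgv -{1}smul_ee -!smulA (smulCA x).
Qed.

Lemma saddE x y : sadd x y =
  if le (gv y) (gv x) then (if le (gv x) (gv y) then gh (gv x) else x) else y.
Proof.
have bip := stm_bipotent.
by rewrite /Defs.sadd !(bltNge bip) sghost_sgv; case: (le (gv y) _); case: (le (gv x) _).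
Qed.

Lemma sgv_sadd x y : gv (sadd x y) = if le (gv y) (gv x) then gv x else gv y.
Proof. rewrite saddE; case: ifP => _ //; case: ifP => _ //; exact: sgv_ghost. Qed.

Lemma sadd_ghost x y : le (gv x) (gv y) -> le (gv y) (gv x) -> sadd x y = mul e x.
Proof. by move=> lexy leyx; rewrite saddE lexy leyx sghost_sgv. Qed.

Lemma saddC x y : sadd x y = sadd y x.
Proof.
have bip := stm_bipotent; rewrite !saddE.
case lexy: (le (gv x) (gv y)); case leyx: (le (gv y) (gv x)) => //.
- by rewrite (bip_anti bip lexy leyx).
- by have := bip_total bip (gv x) (gv y); rewrite lexy leyx.
Qed.

(* Consistent outcomes of the six comparisons give equal sides; the others
   contradict totality or transitivity. *)
Lemma saddA : associative sadd.
Proof.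
move=> x y z; have bip := stm_bipotent.
have trans := bip_trans bip; have total := bip_total bip.
rewrite (saddE (sadd x y)) (saddE x (sadd y z)) !sgv_sadd !saddE.
case lexy: (le (gv x) (gv y)); case leyx: (le (gv y) (gv x));
case leyz: (le (gv y) (gv z)); case lezy: (le (gv z) (gv y));
case lexz: (le (gv x) (gv z)); case lezx: (le (gv z) (gv x)) => //=;
rewrite ?lexy ?leyx ?leyz ?lezy ?lexz ?lezx //=.
all: exfalso; match goal with
  | lt : le ?a ?c = false, le1 : le ?a ?b = true, le2 : le ?b ?c = true |- _ =>
      by rewrite (trans _ _ _ le1 le2) in lt
  | lt1 : le ?a ?b = false, lt2 : le ?b ?a = false |- _ =>
      by have := total a b; rewrite lt1 lt2
  end.
Qed.

Lemma Erel_sym x y : Erel le S x y -> Erel le S y x.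
Proof. by case=> [->|[Dx [Dy exy]]]; [left|right]. Qed.

Lemma Erel_trans x y z : Erel le S x y -> Erel le S y z -> Erel le S x z.
Proof.
case=> [->//|[Dx [Dy exy]]] [<-|[_ [Dz eyz]]]; first by right.
by right; rewrite exy.
Qed.

Lemma Erel_smul_e x y : Erel le S x y -> mul e x = mul e y.
Proof. by case=> [->|[_ [_ ->]]]. Qed.

Lemma Erel_sgv x y : Erel le S x y -> gv x = gv y.
Proof. by move/Erel_smul_e=> exy; apply: sghost_inj; rewrite !sghost_sgv. Qed.

Lemma Dset_mulr x y : Dset le S x -> Dset le S (mul x y).
Proof.
case=> [[m ->]|[y1 [z [y' [-> [lty' ey']]]]]].
  by left; exists (gv (mul (gh m) y)); rewrite sghost_sgv smulA smul_e_ghost.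
right; exists y1, (mul z y), y'; split; first by rewrite smulA.
by split=> //; rewrite !smulA ey'.
Qed.

Lemma Erel_mulr x x' y : Erel le S x x' -> Erel le S (mul x y) (mul x' y).
Proof.
case=> [->|[Dx [Dx' exx']]]; first by left.
by right; split; [|split]; rewrite ?smulA ?exx' //; apply: Dset_mulr.
Qed.

Lemma Erel_mul x x' y y' :
  Erel le S x x' -> Erel le S y y' -> Erel le S (mul x y) (mul x' y').
Proof.
move=> exx' eyy'; apply: Erel_trans (Erel_mulr y exx') _.
by rewrite !(smulC x'); apply: Erel_mulr.
Qed.

(* If [gv y < gv z] but [gv (x y) = gv (x z)], then [x z] lies in D(U) with
   witness [gv y], so it is identified with the ghost [e (x y)]. *)
Lemma Erel_mul_sadd x y z : ~~ le (gv z) (gv y) ->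
  Erel le S (mul x (sadd y z)) (sadd (mul x y) (mul x z)).
Proof.
have bip := stm_bipotent => ltyz.
have leyz : le (gv y) (gv z) by have := bip_total bip (gv y) (gv z); rewrite (negPf ltyz) orbF.
rewrite !saddE (negPf ltyz) !sgvM (bip_mull bip _ leyz).
case: ifP => [lezy | _]; last by left.
have exyz : gv x * gv y = gv x * gv z.
  by apply: (bip_anti bip) lezy; apply: bip_mull.
right; split; [|split].
- right; exists z, x, (gv y); split; first by rewrite smulC.
  split; first by rewrite (bltNge bip).
  by rewrite sghost_sgv !(smulC _ x) !(smulCA x) -!sghost_sgv !sgvM exyz.
- by left; exists (gv x * gv y).
- by rewrite smul_e_ghost -sghost_sgv sgvM exyz.
Qed.

Local Notation hU := (hatU le S).
Local Notation sigma := (sigmaU le S).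
Local Notation H := (hat_ops le S).

Lemma hatU_ext (C D : hU) : sval C = sval D -> C = D.
Proof. by case: C D => [C pC] [D pD] /= eqCD; subst D; rewrite (proof_irrelevance _ pC pD). Qed.

Lemma sigmaU_eq x y : Erel le S x y -> sigma x = sigma y.
Proof.
move=> exy; apply: hatU_ext; apply: functional_extensionality => z /=.
apply: propositional_extensionality; split; first exact: Erel_trans (Erel_sym exy).
exact: Erel_trans exy.
Qed.

Lemma sigmaU_Erel x y : sigma x = sigma y -> Erel le S x y.
Proof. by move=> sxy; have /= : sval (sigma x) y by rewrite sxy; left. Qed.

Lemma sigmaU_hrepr (C : hU) : sigma (hrepr C) = C.
Proof.
apply: hatU_ext; rewrite /hrepr /=.
by case: (constructive_indefinite_description _ _).
Qed.

Lemma Erel_hrepr x : Erel le S (hrepr (sigma x)) x.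
Proof. by apply: sigmaU_Erel; rewrite sigmaU_hrepr. Qed.

Lemma sigmaU_ind (P : hU -> Prop) : (forall x, P (sigma x)) -> forall C, P C.
Proof. by move=> Psigma C; rewrite -(sigmaU_hrepr C). Qed.

Lemma hat_smul x y : smul H (sigma x) (sigma y) = sigma (mul x y).
Proof. by apply: sigmaU_eq; apply: Erel_mul; apply: Erel_hrepr. Qed.

Lemma hat_sgv x : sgv H (sigma x) = gv x.
Proof. exact: Erel_sgv (Erel_hrepr x). Qed.

Lemma hat_e : se H = sigma e. Proof. by []. Qed.
Lemma hat_one : sone H = sigma (sone S). Proof. by []. Qed.
Lemma hat_zero : szero H = sigma (szero S). Proof. by []. Qed.
Lemma hat_ghost m : sghost H m = sigma (gh m). Proof. by []. Qed.

Lemma hat_sadd x y : Defs.sadd le H (sigma x) (sigma y) = sigma (sadd x y).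
Proof. by rewrite /Defs.sadd !hat_sgv; do 2 case: ifP => // _; rewrite hat_e hat_smul. Qed.

Lemma hat_stmonoid : is_stmonoid le H.
Proof.
split; first exact: stm_bipotent.
- split.
  + by elim/sigmaU_ind=> x; elim/sigmaU_ind=> y; elim/sigmaU_ind=> z; rewrite !hat_smul smulA.
  + by elim/sigmaU_ind=> x; elim/sigmaU_ind=> y; rewrite !hat_smul smulC.
  + by split; elim/sigmaU_ind=> x; rewrite ?hat_one ?hat_zero hat_smul ?smul1 ?smul0.
  + by rewrite hat_e hat_smul smul_ee.
  + elim/sigmaU_ind=> x; rewrite hat_e hat_zero hat_smul => /sigmaU_Erel/Erel_smul_e.
    by rewrite smul_eK smulr0 => /smul_e_eq0 ->.
- split.
  + by move=> m n; rewrite !hat_ghost => /sigmaU_Erel/Erel_smul_e; rewrite !smul_e_ghost; apply: sghost_inj.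
  + by rewrite hat_ghost sghost1.
  + by rewrite hat_ghost sghost0.
  + by move=> m n; rewrite !hat_ghost hat_smul sghostM.
  + by elim/sigmaU_ind=> x; rewrite hat_ghost hat_sgv hat_e hat_smul sghost_sgv.
Qed.

Lemma hat_stsemiring : is_stsemiring le H.
Proof.
have bip := stm_bipotent.
split; first exact: hat_stmonoid.
- by elim/sigmaU_ind=> x; elim/sigmaU_ind=> y; elim/sigmaU_ind=> z; rewrite !hat_sadd saddA.
- elim/sigmaU_ind=> x; elim/sigmaU_ind=> y; elim/sigmaU_ind=> z.
  rewrite hat_sadd !hat_smul hat_sadd.
  case: (boolP (le (gv z) (gv y))) => lezy; last exact/sigmaU_eq/Erel_mul_sadd.
  case: (boolP (le (gv y) (gv z))) => leyz; last first.
    by rewrite saddC (saddC (mul x y)); apply/sigmaU_eq/Erel_mul_sadd.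
  by rewrite !sadd_ghost ?sgvM ?bip_mull // smulCA.
Qed.

End SupertropicalMonoid.

Section U0Monoid.
Variables (R M : comPzSemiRingType) (le : rel M) (v : R -> M).
Hypothesis mvalv : is_mvaluation le v.
Local Notation S := (U0_ops v).
Local Notation mul := (smul S).

Lemma mval1 : v 1 = 1. Proof. by case: mvalv. Qed.
Lemma mvalM a b : v (a * b) = v a * v b. Proof. by case: mvalv. Qed.

Lemma toU0_inl a (va_neq0 : v a != 0) : toU0 v a = inl (exist _ a va_neq0).
Proof.
rewrite /toU0; case: {-}_ / idP => [va_neq0'|]; last by rewrite va_neq0.
by rewrite (eq_irrelevance va_neq0 va_neq0').
Qed.

Lemma toU0_eq0 a : v a = 0 -> toU0 v a = inr 0.
Proof. by move=> va0; rewrite /toU0; case: {-}_ / idP => // /negP[]; rewrite va0. Qed.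

Lemma U0_ind (P : U0 v -> Prop) :
  (forall a, P (toU0 v a)) -> (forall m, P (inr m)) -> forall x, P x.
Proof. by move=> Pto Pinr [[a va_neq0]|m] //; rewrite -toU0_inl. Qed.

Lemma sgv_toU0 a : sgv S (toU0 v a) = v a.
Proof.
have [va0|va_neq0] := eqVneq (v a) 0; first by rewrite toU0_eq0.
by rewrite (toU0_inl va_neq0).
Qed.

Lemma smul_toU0_ghost a m : mul (toU0 v a) (inr m) = inr (v a * m).
Proof.
have [va0|va_neq0] := eqVneq (v a) 0; first by rewrite toU0_eq0 //= va0.
by rewrite (toU0_inl va_neq0).
Qed.

Lemma smul_ghost_toU0 a m : mul (inr m) (toU0 v a) = inr (m * v a).
Proof.
have [va0|va_neq0] := eqVneq (v a) 0; first by rewrite toU0_eq0 //= va0.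
by rewrite (toU0_inl va_neq0).
Qed.

Lemma smul_toU0 a b : mul (toU0 v a) (toU0 v b) = toU0 v (a * b).
Proof.
have [va0|va_neq0] := eqVneq (v a) 0.
  by rewrite (toU0_eq0 va0) smul_ghost_toU0 mul0r toU0_eq0 // mvalM va0 mul0r.
have [vb0|vb_neq0] := eqVneq (v b) 0.
  by rewrite (toU0_eq0 vb0) smul_toU0_ghost mulr0 toU0_eq0 // mvalM vb0 mulr0.
by rewrite (toU0_inl va_neq0) (toU0_inl vb_neq0).
Qed.

Lemma smul_ghost m n : mul (inr m) (inr n) = inr (m * n).
Proof. by []. Qed.

Lemma U0_one : sone S = toU0 v 1.
Proof.
have [v10|v1_neq0] := eqVneq (v 1) 0; last by rewrite /= (toU0_inl v1_neq0).
by rewrite /= (toU0_eq0 v10) -v10 mval1.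
Qed.

Lemma U0_stmonoid : is_bipotent le -> is_stmonoid le S.
Proof.
move=> bip; split=> //.
- split.
  + elim/U0_ind=> [a|m]; elim/U0_ind=> [b|n]; elim/U0_ind=> [c|p];
    by rewrite ?(smul_toU0, smul_toU0_ghost, smul_ghost_toU0, smul_ghost, mvalM, mulrA).
  + elim/U0_ind=> [a|m]; elim/U0_ind=> [b|n];
    by rewrite ?(smul_toU0, smul_toU0_ghost, smul_ghost_toU0, smul_ghost) mulrC.
  + split; elim/U0_ind=> [a|m];
    by rewrite ?U0_one ?(smul_toU0, smul_toU0_ghost, smul_ghost_toU0, smul_ghost, mval1, mul1r, mul0r).
  + by rewrite smul_ghost mulr1.
  + elim/U0_ind=> [a|m]; rewrite ?(smul_ghost_toU0, smul_ghost) mul1r //= => -[va0].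
    exact: toU0_eq0.
- split=> //; first by move=> m n [].
  by elim/U0_ind=> [a|m]; rewrite ?(smul_ghost_toU0, smul_ghost) ?sgv_toU0 mul1r.
Qed.

End U0Monoid.

Section InitialCover.
Variables (R M : comPzSemiRingType) (le : rel M) (v : R -> M).
Hypotheses (bipM : is_bipotent le) (mvalv : is_mvaluation le v).
Local Notation S := (U0_ops v).
Local Notation H := (hat_ops le S).
Local Notation sigma := (sigmaU le S).

Let stmS : is_stmonoid le S := U0_stmonoid mvalv bipM.

Lemma phiv_msupervaluation : is_msupervaluation le (Uv_ops le v) (phiv le v).
Proof.
split; first exact: hat_stmonoid.
- by rewrite /phiv /phi0 toU0_eq0 //; case: mvalv.
- by rewrite /phiv /phi0 hat_one (U0_one mvalv).
- by move=> a b; rewrite /phiv /phi0 (hat_smul stmS) (smul_toU0 mvalv).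
- by move=> a b; rewrite /phiv /phi0 !(hat_sgv stmS) !sgv_toU0; case: mvalv.
Qed.

Lemma phiv_covers : covers (Uv_ops le v) (phiv le v) v.
Proof. by move=> a; rewrite /phiv /phi0 hat_e (hat_smul stmS) smul_ghost_toU0 mul1r. Qed.

Variables (V : Type) (T : stm_ops M V) (psi : R -> V).
Hypotheses (stsT : is_stsemiring le T) (msvpsi : is_msupervaluation le T psi).
Hypothesis psi_covers : covers T psi v.

Let stmT : is_stmonoid le T. Proof. by case: stsT. Qed.

Definition U0_lift (x : U0 v) : V :=
  match x with inl a => psi (sval a) | inr m => sghost T m end.

Lemma U0_lift_toU0 a : U0_lift (toU0 v a) = psi a.
Proof.
have [va0|va_neq0] := eqVneq (v a) 0; last by rewrite (toU0_inl va_neq0).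
rewrite (toU0_eq0 va0) /= (sghost0 stmT); symmetry; apply: (smul_e_eq0 stmT).
by rewrite psi_covers va0 (sghost0 stmT).
Qed.

Lemma U0_liftM x y : U0_lift (smul S x y) = smul T (U0_lift x) (U0_lift y).
Proof.
have psiM a b : psi (a * b) = smul T (psi a) (psi b) by case: msvpsi.
elim/U0_ind: x => [a|m]; elim/U0_ind: y => [b|n];
rewrite ?(smul_toU0 mvalv, smul_toU0_ghost, smul_ghost_toU0, smul_ghost) ?U0_lift_toU0 /=.
- exact: psiM.
- by rewrite (sghostM stmT) -psi_covers -(smulA stmT) (smulCA stmT) (smul_e_ghost stmT).
- by rewrite (sghostM stmT) -psi_covers (smulCA stmT) (smulA stmT) (smul_e_ghost stmT).
- exact: (sghostM stmT).
Qed.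

Lemma U0_lift_e x : U0_lift (smul S (se S) x) = smul T (se T) (U0_lift x).
Proof. by rewrite U0_liftM /= (sghost1 stmT). Qed.

Lemma sgv_U0_lift x : sgv T (U0_lift x) = sgv S x.
Proof. by apply: (sghost_inj stmT); rewrite (sghost_sgv stmT) -U0_lift_e -(sghost_sgv stmS). Qed.

(* Write [b := U0_lift] and [x = y z] with witness [y' < gv y].  Then
   [b y = y' + b y], so distributivity in [V] gives [b x = y' b z + b x], and
   [y' b z = b (e y z) = e (b x)] has the same ghost value as [b x]. *)
Lemma U0_lift_Dset x : Dset le S x -> U0_lift x = smul T (se T) (U0_lift x).
Proof.
case=> [[m ->]|[y [z [y' [-> [lty' ey']]]]]]; first by rewrite /= (smul_e_ghost stmT).
have absorb : U0_lift y = sadd le T (sghost T y') (U0_lift y).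
  by rewrite /Defs.sadd (sgv_ghost stmT) sgv_U0_lift lty'.
case: stsT => _ _ distr.
rewrite U0_liftM (smulC stmT (U0_lift y)) absorb distr.
rewrite (smulC stmT _ (sghost T y')) -[sghost T y']/(U0_lift (sghost S y')) -U0_liftM ey'.
rewrite -(smulA stmS) U0_lift_e U0_liftM (smulC stmT (U0_lift z)).
by rewrite (sadd_ghost stmT) ?(sgv_e stmT) ?(bip_refl bipM) ?(smul_eK stmT).
Qed.

Lemma U0_lift_Erel x y : Erel le S x y -> U0_lift x = U0_lift y.
Proof.
case=> [->//|[Dx [Dy exy]]].
by rewrite (U0_lift_Dset Dx) (U0_lift_Dset Dy) -!U0_lift_e exy.
Qed.

Definition Uv_lift (C : Uv le v) : V := U0_lift (hrepr C).

Lemma Uv_lift_sigma x : Uv_lift (sigma x) = U0_lift x.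
Proof. by apply: U0_lift_Erel; apply: Erel_hrepr. Qed.

Lemma Uv_lift_hom : is_st_hom le H T Uv_lift.
Proof.
split.
- by rewrite hat_zero Uv_lift_sigma /= (sghost0 stmT).
- by rewrite hat_one Uv_lift_sigma (U0_one mvalv) U0_lift_toU0; case: msvpsi.
- by elim/sigmaU_ind=> x; elim/sigmaU_ind=> y;
    rewrite (hat_smul stmS) !Uv_lift_sigma U0_liftM.
- elim/sigmaU_ind=> x; elim/sigmaU_ind=> y.
  rewrite (hat_sadd stmS) !Uv_lift_sigma /Defs.sadd !sgv_U0_lift.
  by do 2 case: ifP => // _; apply: U0_lift_e.
Qed.

Lemma Uv_lift_over : over_M H T Uv_lift.
Proof. by move=> m; rewrite hat_ghost Uv_lift_sigma. Qed.

Lemma Uv_lift_phiv a : psi a = Uv_lift (phiv le v a).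
Proof. by rewrite /phiv Uv_lift_sigma U0_lift_toU0. Qed.

Lemma Uv_lift_unique (f : Uv le v -> V) :
  over_M H T f -> (forall a, psi a = f (phiv le v a)) -> Uv_lift = f.
Proof.
move=> f_over f_phiv; apply: functional_extensionality.
elim/sigmaU_ind; elim/U0_ind=> [a|m].
  by rewrite Uv_lift_sigma U0_lift_toU0 f_phiv.
by rewrite Uv_lift_sigma -[sigma (inr m)]/(sghost H m) f_over.
Qed.

End InitialCover.

Theorem theorem6p9 (R M : comPzSemiRingType) (le : rel M) (v : R -> M) :
  is_bipotent le -> is_mvaluation le v -> (forall m : M, exists a : R, v a = m) ->
  [/\ is_supervaluation le (Uv_ops le v) (phiv le v),
      covers (Uv_ops le v) (phiv le v) v &
      forall (V : Type) (T : stm_ops M V) (psi : R -> V),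
        is_supervaluation le T psi -> covers T psi v ->
        exists! alpha : Uv le v -> V,
          [/\ is_st_hom le (Uv_ops le v) T alpha,
              over_M (Uv_ops le v) T alpha &
              forall a, psi a = alpha (phiv le v a)]].
Proof.
move=> bipM mvalv _; have stmU0 := U0_stmonoid mvalv bipM.
split.
- by split; [exact: hat_stsemiring | exact: phiv_msupervaluation].
- exact: phiv_covers.
- move=> V T psi [stsT msvpsi] psi_covers; exists (Uv_lift T psi).
  split; first by split; [exact: Uv_lift_hom | exact: Uv_lift_over | exact: Uv_lift_phiv].
  by move=> f [_ f_over f_phiv]; apply: Uv_lift_unique.
Qed.
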